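(* Consider the scheduling model described in the context with parameters $(p_k,q_k,d,K)$. Suppose a fixed source $k$ is scheduled in every time slot, starting from $t=-\infty$. Then the expected reward received by the monitoring station in any time slot equals $\mu_k := \frac{p_kq_k}{1-d(1-p_k)}$. Consequently the optimal source, i.e. the source whose permanent scheduling (from $t=-\infty$) maximizes the expected reward received by the monitoring station, and which the oracle policy schedules in every time slot, is $$k^* = \arg\max_{1\le k\le K}\frac{p_kq_k}{1-d(1-p_k)}.$$
   Context: Model: there are $K$ sources, one communication channel and one monitoring station; time is slotted. In each slot exactly one source is scheduled to transmit its update. If source $k$ is scheduled, the transmission succeeds with probability $p_k$ (independently across slots and of everything else), and the update is a correct measurement ($Q=1$) with probability $q_k$, otherwise $Q=0$ (independently across slots and of everything else). The age of information $a(t)$ at slot $t$ satisfies $a(t)=1$ if the transmission in slot $t-1$ succeeded and $a(t)=a(t-1)+1$ otherwise. With a known depreciation factor $d\in(0,1)$, the reward in slot $t$ is $r(t)=Q(t-a(t))\,d^{a(t)-1}$, where $Q(s)\in\{0,1\}$ is the correctness indicator of the update successfully delivered in slot $s$; equivalently $r(t)=Q(t-1)$ if the transmission in slot $t-1$ succeeds and $r(t)=d\,r(t-1)$ otherwise. *)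

From HB Require Import structures.
From mathcomp Require Import all_boot all_order all_algebra.
From mathcomp Require Import all_classical all_reals all_analysis.
Set Implicit Arguments. Unset Strict Implicit. Unset Printing Implicit Defensive.
Import Order.TTheory GRing.Theory Num.Theory.
Local Open Scope classical_set_scope.
Local Open Scope ring_scope.

Section Defs.
Context {R : realType} {dT : measure_display} {T : measurableType dT}.

Definition mutually_independent {I : eqType} (P : probability T R)
    (X : I -> T -> bool) : Prop :=
  forall (J : seq I) (b : I -> bool), uniq J ->
    P (\big[setI/setT]_(i <- J) [set w | X i w = b i]) =
    (\prod_(i <- J) P [set w | X i w = b i])%E.

(* The channel/measurement model when one fixed source, with success
   probability p and correctness probability q, is scheduled in every slot
   t : int (i.e. from t = -oo):
   S t w = transmission in slot t succeeded, Q t w = the update of slot t is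
   correct; all these indicators are mutually independent. *)
Definition fixed_source_model (P : probability T R) (p q : R)
    (S Q : int -> T -> bool) : Prop :=
  [/\ forall t, measurable [set w | S t w],
      forall t, measurable [set w | Q t w],
      forall t, P [set w | S t w] = p%:E,
      forall t, P [set w | Q t w] = q%:E &
      mutually_independent P
        (fun i : int + int => match i with inl t => S t | inr t => Q t end)].

(* Reward at slot t: with a(t) = age = number of slots since the last
   successful transmission (a(t) = j+1 where j is minimal with S (t-j-1)),
   r(t) = Q(t - a(t)) * d^(a(t)-1).  On the (null) event that no transmission
   ever succeeded before t the reward is set to 0. *)
Definition reward (d : R) (S Q : int -> T -> bool) (t : int) (w : T) : R :=
  match pselect (exists j : nat, S (t - j.+1%:Z) w) with
  | left h => let j := ex_minn h in (Q (t - j.+1%:Z) w)%:R * d ^+ j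
  | right _ => 0
  end.

End Defs.

Definition mu {R : realType} (d p q : R) : R := p * q / (1 - d * (1 - p)).

From HB Require Import structures.
From mathcomp Require Import all_boot all_order all_algebra.
From mathcomp Require Import all_classical all_reals all_analysis.
From mathcomp Require Import measurable_realfun ring lra.
Import Order.TTheory GRing.Theory Num.Theory.
Local Open Scope classical_set_scope.
Local Open Scope ring_scope.

(* The reward at slot t equals d^n exactly on the event that the last
   successful transmission before t happened n+1 slots earlier and carried a
   correct update, and it vanishes outside these pairwise disjoint events.
   When a single source is scheduled forever, that event is the intersection
   of n failures, one success and one correct measurement, so independence
   gives it probability (1-p)^n p q.  The expected reward is therefore the
   geometric series sum_n p q (d(1-p))^n = p q / (1 - d(1-p)), and comparing
   these values ranks the sources. *)

Lemma eseries_single {R : realFieldType} (f : nat -> \bar R) n :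
  (forall k, k != n -> f k = 0%E) -> (\sum_(k <oo) f k = f n)%E.
Proof.
move=> f0; apply/cvg_lim => //; apply: cvg_near_cst; near=> N.
rewrite /= (bigD1_seq n) ?mem_index_iota ?iota_uniq //=; last by near: N; exists n.+1.
by rewrite big1 ?adde0 // => k /andP[_ kn]; exact: f0.
Unshelve. all: by end_near. Qed.

Lemma eseries_geometric {R : realType} (a z : R) : `|z| < 1 ->
  (\sum_(n <oo) (geometric a z n)%:E = (a / (1 - z))%:E)%E.
Proof.
move=> z1; transitivity (limn (EFin \o series (geometric a z))).
  by congr (limn _); apply/funext => n /=; rewrite sumEFin seriesEnat.
rewrite EFin_lim; last exact: is_cvg_geometric_series.
(* Stated at [R^o], [cvg_lim] unifies with the limit produced by [EFin_lim]. *)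
by congr (_%:E); apply: (@cvg_lim R^o) => //; exact: cvg_geometric_series.
Qed.

Lemma eqz_subS2l (t : int) (i n : nat) :
  (t - i.+1%:Z == t - n.+1%:Z) = (i == n).
Proof. by rewrite (inj_eq (addrI t)) eqr_opp eqz_nat eqSS. Qed.

Section age_events.
Context {R : realType} {dT : measure_display} {T : measurableType dT}.
Variables (d : R) (S Q : int -> T -> bool) (t : int).

Definition correct_at_age (n : nat) : set T :=
  [set w | [/\ forall i, (i < n)%N -> ~~ S (t - i.+1%:Z) w,
               S (t - n.+1%:Z) w & Q (t - n.+1%:Z) w]].

Lemma correct_at_age_inj m n w :
  correct_at_age m w -> correct_at_age n w -> m = n.
Proof.
move=> [Nm Sm _] [Nn Sn _]; case: (ltngtP m n) => // [mn|nm].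
- by move: (Nn _ mn); rewrite Sm.
- by move: (Nm _ nm); rewrite Sn.
Qed.

Lemma reward_correct_at_age n w :
  correct_at_age n w -> reward d S Q t w = d ^+ n.
Proof.
move=> [Nn Sn Qn]; rewrite /reward; case: pselect => [h|[]]; last by exists n.
case: ex_minnP => j Sj jmin.
have -> : j = n.
  apply/eqP; rewrite eqn_leq jmin //= leqNgt; apply/negP => jn.
  by move: (Nn _ jn); rewrite Sj.
by rewrite Qn mul1r.
Qed.

Lemma reward_eq0 w : (forall n, ~ correct_at_age n w) -> reward d S Q t w = 0.
Proof.
move=> Nage; rewrite /reward; case: pselect => // h.
case: ex_minnP => j Sj jmin; case Qj : (Q _ w); last by rewrite mul0r.
exfalso; apply: (Nage j); split => // i ij; apply/negP => Si.
by move: (jmin _ Si); rewrite leqNgt ij.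
Qed.

Lemma reward_eseries w :
  (reward d S Q t w)%:E = (\sum_(n <oo) (d ^+ n * \1_(correct_at_age n) w)%:E)%E.
Proof.
have [[n En]|Nage] := pselect (exists n, correct_at_age n w).
  rewrite (@reward_correct_at_age n w En) (eseries_single _ n);
    first by rewrite indicE mem_set ?mulr1.
  move=> k kn; rewrite indicE memNset ?mulr0 // => Ek.
  by move/eqP: kn; apply; exact: correct_at_age_inj Ek En.
rewrite reward_eq0 => [|n En]; last by apply: Nage; exists n.
rewrite eseries0 // => k _ _; rewrite indicE memNset ?mulr0 // => Ek.
by apply: Nage; exists k.
Qed.

End age_events.

Section fixed_source.
Context {R : realType} {dT : measure_display} {T : measurableType dT}.
Context {P : probability T R} {p q : R} {S Q : int -> T -> bool}.

Definition slot_outcome (i : int + int) : T -> bool :=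
  match i with inl s => S s | inr s => Q s end.

Definition age_slots (t : int) (n : nat) : seq (int + int) :=
  [seq inl (t - i.+1%:Z) | i <- index_iota 0 n] ++
  [:: inl (t - n.+1%:Z); inr (t - n.+1%:Z)].

Definition age_outcomes (t : int) (n : nat) (i : int + int) : bool :=
  match i with inl s => s == t - n.+1%:Z | inr _ => true end.

Lemma correct_at_ageE t n :
  correct_at_age S Q t n =
  \big[setI/setT]_(i <- age_slots t n)
    [set w | slot_outcome i w = age_outcomes t n i].
Proof.
rewrite -bigcap_seq /age_slots; apply/seteqP; split => w /=.
  move=> [Nn Sn Qn] [s|s]; rewrite /= mem_cat => /orP[/mapP[i]|].
  - rewrite mem_index_iota => /andP[_ lin] [->].
    by rewrite eqz_subS2l (ltn_eqF lin); exact/negbTE/Nn.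
  - by rewrite !inE => /orP[/eqP[->]|//]; rewrite eqxx.
  - by case.
  - by rewrite !inE => /orP[//|/eqP[->]].
move=> Ew; split.
- move=> i lin; apply/negbT; rewrite -(ltn_eqF lin) -(eqz_subS2l t).
  by apply: (Ew (inl _)); rewrite /= mem_cat map_f ?mem_index_iota.
- have := Ew (inl (t - n.+1%:Z)); rewrite /= eqxx; apply.
  by rewrite mem_cat !inE eqxx orbT.
- by apply: (Ew (inr _)); rewrite /= mem_cat !inE eqxx !orbT.
Qed.

Lemma uniq_age_slots t n : uniq (age_slots t n).
Proof.
rewrite cat_uniq; apply/and3P; split.
- rewrite map_inj_in_uniq ?iota_uniq // => i j _ _ [] /eqP.
  by rewrite eqz_subS2l => /eqP.
- apply/hasPn => x; rewrite !inE => /orP[/eqP->|/eqP->]; apply/mapP => -[// i].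
  rewrite mem_index_iota => /andP[_ lin] [] /eqP.
  by rewrite eq_sym eqz_subS2l (ltn_eqF lin).
- by [].
Qed.

Hypothesis model : fixed_source_model P p q S Q.

Lemma measurable_slot_outcome i b : measurable [set w | slot_outcome i w = b].
Proof.
case: model => mS mQ _ _ _.
have mX : measurable [set w | slot_outcome i w] by case: i.
case: b => //; rewrite (_ : [set w | _ = false] = ~` [set w | slot_outcome i w]).
  exact: measurableC.
by apply/seteqP; split => w /=; case: (slot_outcome i w).
Qed.

Lemma measurable_correct_at_age t n : measurable (correct_at_age S Q t n).
Proof.
rewrite correct_at_ageE; apply: bigsetI_measurable => i _.
exact: measurable_slot_outcome.
Qed.

Lemma probability_slot_failure s : P [set w | S s w = false] = (1 - p)%:E.
Proof.
case: model => mS _ PS _ _.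
rewrite (_ : [set w | _ = false] = ~` [set w | S s w]).
  by rewrite probability_setC // PS EFinB.
by apply/seteqP; split => w /=; case: (S s w).
Qed.

Lemma probability_correct_at_age t n :
  P (correct_at_age S Q t n) = ((1 - p) ^+ n * p * q)%:E.
Proof.
case: model => _ _ PS PQ indep.
rewrite correct_at_ageE indep ?uniq_age_slots // big_cat big_map !big_cons big_nil /=.
rewrite eqxx PS PQ mule1 (eq_big_seq (fun=> (1 - p)%:E)) => [|i].
  by rewrite prodEFin prodr_const_nat subn0 -!EFinM mulrA.
rewrite mem_index_iota => /andP[_ lin].
by rewrite eqz_subS2l (ltn_eqF lin) probability_slot_failure.
Qed.

Lemma success_probability_bounds : 0 <= p <= 1.
Proof.
case: model => mS _ PS _ _.
by rewrite -!lee_fin -(PS 0) measure_ge0 probability_le1.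
Qed.

Lemma expected_reward d t : 0 <= d < 1 ->
  (\int[P]_w (reward d S Q t w)%:E = (mu d p q)%:E)%E.
Proof.
move=> /andP[d0 d1]; have /andP[p0 p1] := success_probability_bounds.
under eq_integral do rewrite reward_eseries.
rewrite integral_nneseries //; last 2 first.
- move=> n; apply/measurable_EFinP/measurable_funM => //.
  exact/measurable_indic/measurable_correct_at_age.
- by move=> n w _; rewrite lee_fin mulr_ge0 ?exprn_ge0.
rewrite (eq_eseriesr (g := fun n => (geometric (p * q) (d * (1 - p)) n)%:E)) => [|n _].
  by rewrite eseries_geometric // ger0_norm; nra.
have mE := measurable_correct_at_age t n.
rewrite (integralZl_indic _ (fun=> correct_at_age S Q t n)) ?integral_indic ?setIT //;
  last by rewrite ltNge exprn_ge0.
transitivity ((d ^+ n)%:E * ((1 - p) ^+ n * p * q)%:E)%E.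
  by congr (_ * _)%E; exact: probability_correct_at_age.
by rewrite -EFinM /geometric /= exprMn; congr (_%:E); ring.
Qed.

End fixed_source.

Theorem theorem1 (R : realType) (K : nat) (p q : 'I_K -> R) (d : R)
  (hp : forall k, 0 <= p k <= 1) (hq : forall k, 0 <= q k <= 1)
  (hd : 0 < d < 1) :
  (* expected reward in any slot under permanent scheduling of source k *)
  (forall (k : 'I_K) (dT : measure_display) (T : measurableType dT)
          (P : probability T R) (S Q : int -> T -> bool),
      fixed_source_model P (p k) (q k) S Q ->
      forall t : int,
        (\int[P]_w (reward d S Q t w)%:E = (mu d (p k) (q k))%:E)%E)
  /\
  (* hence an argmax of mu is an optimal source *)
  (forall kstar : 'I_K, (forall k, mu d (p k) (q k) <= mu d (p kstar) (q kstar)) ->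
    forall (k : 'I_K)
      (dT : measure_display) (T : measurableType dT) (P : probability T R)
      (S Q : int -> T -> bool)
      (dT' : measure_display) (T' : measurableType dT') (P' : probability T' R)
      (S' Q' : int -> T' -> bool),
      fixed_source_model P (p k) (q k) S Q ->
      fixed_source_model P' (p kstar) (q kstar) S' Q' ->
      forall t : int,
        (\int[P]_w (reward d S Q t w)%:E <= \int[P']_w (reward d S' Q' t w)%:E)%E).
Proof.
(* [hp] and [hq] are unused: [expected_reward] gets the bounds it needs from the model. *)
have hd' : 0 <= d < 1 by case/andP: hd => d0 d1; rewrite ltW.
split=> [k dT T P S Q model t|kstar kstar_max k].
  exact: expected_reward.
move=> dT T P S Q dT' T' P' S' Q' model model' t.
by rewrite (expected_reward model) ?(expected_reward model') // lee_fin.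
Qed.
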